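(* Let $F|R$ be an extension of ordered fields with canonical valuation $v$, and let $D<E$ be non-empty subsets of $R$. Assume that either $(D,E)$ is a non-ball cut in $R$ with $\mathrm{Betw}_F(D,E)\neq\emptyset$, or $(D,E)$ is a ball complement in $R$. Then $\mathrm{Betw}_F(D,E)=B_S(a,F)$ for each $a\in\mathrm{Betw}_F(D,E)$, where $S$ is the largest final segment of $vF$ disjoint from $v(E-D)$ (equivalently, the largest subset $S$ of $vF$ with $S>v(E-D)$).
   Context: The canonical valuation $v$ of an ordered field has as valuation ring the convex hull of $\mathbb Z$. $\mathrm{Betw}_F(D,E)=\{c\in F\mid D<c<E\}$ and $v(E-D)=\{v(e-d)\mid e\in E,d\in D\}$. For an ordered field $K$, $a\in K$ and a final segment $S$ of $vK$ (possibly empty), $B_S(a,K)=\{b\in K\mid v(a-b)\in S\cup\{\infty\}\}$ is a ball. A ball complement of a ball $B$ of $R$ is a pair $(D,E)$ with $D<B<E$ and $D\cup B\cup E=R$. A cut of $R$ is a pair $(D,E)$ with $D<E$ and $D\cup E=R$; for nonempty $A\subseteq R$, $A^+=(D,R\setminus D)$ with $D$ the smallest initial segment containing $A$, and $A^-=(R\setminus E,E)$ with $E$ the smallest final segment containing $A$; a cut is a ball cut if it is $B^+$ or $B^-$ for some ball $B$, and a non-ball cut otherwise. *)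

From HB Require Import structures.
From mathcomp Require Import all_boot all_order all_algebra.
From mathcomp Require Import boolp classical_sets.
Set Implicit Arguments. Unset Strict Implicit. Unset Printing Implicit Defensive.
Import Order.TTheory GRing.Theory Num.Theory.
Local Open Scope ring_scope.
Local Open Scope classical_set_scope.

(* Ordered fields are modelled as [realFieldType]s.  An extension F|R of
   ordered fields is modelled as a subfield R (a subset) of F, with the
   induced order. *)
Definition subfield (F : realFieldType) (R : set F) : Prop :=
  [/\ R 0, R 1,
      (forall x y, R x -> R y -> R (x - y)),
      (forall x y, R x -> R y -> R (x * y)) &
      (forall x, R x -> R x^-1)].

(* Valuation ring of the canonical valuation: the convex hull of Z. *)
Definition vring (F : realFieldType) : set F :=
  [set z | exists m n : int, (m%:~R <= z) && (z <= n%:~R)].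

(* vle x y  <->  v x <= v y  (with v 0 = infinity), i.e. y lies in x * O. *)
Definition vle (F : realFieldType) (x y : F) : Prop :=
  exists2 z, vring z & y = z * x.

(* Subsets of the value group vK of a subfield K are represented by the
   set of nonzero elements of K whose value lies in the subset.
   final_seg K S : S represents a final segment of vK. *)
Definition final_seg (F : realFieldType) (K S : set F) : Prop :=
  (forall x, S x -> K x /\ x != 0) /\
  (forall x y, S x -> K y -> y != 0 -> vle x y -> S y).

(* B_S(a,K) = {b in K | v(a - b) in S u {infinity}} *)
Definition vball (F : realFieldType) (K S : set F) (a : F) : set F :=
  [set b | K b /\ (b = a \/ S (a - b))].

Definition is_ball (F : realFieldType) (K B : set F) : Prop :=
  exists a S, [/\ K a, final_seg K S & B = vball K S a].

Definition setlt (F : realFieldType) (A B : set F) : Prop :=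
  forall x y, A x -> B y -> x < y.

Definition Betw (F : realFieldType) (K D E : set F) : set F :=
  [set c | K c /\ (forall d, D d -> d < c) /\ (forall e, E e -> c < e)].

Definition ball_complement (F : realFieldType) (K D E : set F) : Prop :=
  exists B, [/\ is_ball K B, setlt D B, setlt B E & D `|` B `|` E = K].

Definition is_cut (F : realFieldType) (K D E : set F) : Prop :=
  D `<=` K /\ E `<=` K /\ setlt D E /\ D `|` E = K.

Definition init_hull (F : realFieldType) (K A : set F) : set F :=
  [set y | K y /\ exists2 x, A x & y <= x].
Definition final_hull (F : realFieldType) (K A : set F) : set F :=
  [set y | K y /\ exists2 x, A x & x <= y].

Definition cut_plus (F : realFieldType) (K A : set F) : set F * set F :=
  (init_hull K A, K `\` init_hull K A).
Definition cut_minus (F : realFieldType) (K A : set F) : set F * set F :=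
  (K `\` final_hull K A, final_hull K A).

Definition ball_cut (F : realFieldType) (K D E : set F) : Prop :=
  exists B, is_ball K B /\ ((D, E) = cut_plus K B \/ (D, E) = cut_minus K B).

Definition disj_vdiff (F : realFieldType) (S D E : set F) : Prop :=
  forall d e, D d -> E e -> ~ S (e - d).

From mathcomp Require Import all_boot all_order all_algebra.
From mathcomp Require Import boolp classical_sets.
From mathcomp Require Import ring lra.
Set Implicit Arguments. Unset Strict Implicit. Unset Printing Implicit Defensive.
Import Order.TTheory GRing.Theory Num.Theory.
Local Open Scope ring_scope.
Local Open Scope classical_set_scope.

(* Three facts make [Betw_F(D,E)] the ball
   [B_S(a,F)]: every gap [e - d] dominates, up to any integer factor, some
   smaller gap (so a [b] between [D] and [E] has [v(a - b)] above all of
   [v(E - D)]); and each of [a - d], [e - a] is dominated by some gap (so a [b]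
   that close to [a] crosses neither [D] nor [E]).  For a non-ball cut the first
   comes from subdividing [[d, e]] by points of [R], the others because
   otherwise [D] (resp. [E]) would be the hull of the ball of radius
   [v(a - d)] around [d] (resp. [v(e - a)] around [e]).  For a ball complement
   with centre [c] all three follow from [c - x] lying in [D] and [c + x] in
   [E] whenever [v x] is below the radius segment of the ball. *)

Section Valuation.
Variable F : realFieldType.
Implicit Types x y z : F.

Lemma vleP x y : vle x y <-> exists n : nat, `|y| <= n%:R * `|x|.
Proof.
split.
- case=> z [m [k /andP[hm hk]]] ->.
  exists (`|m| + `|k|)%N; rewrite normrM ler_wpM2r // natrD !natr_absz !intr_norm.
  have := ler_norm (k%:~R : F); have := ler_norm (- m%:~R : F).
  have := normr_ge0 (m%:~R : F); have := normr_ge0 (k%:~R : F).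
  rewrite normrN ler_norml; lra.
- case=> n; have [->|x0] := eqVneq x 0.
    rewrite normr0 mulr0 normr_le0 => /eqP ->.
    by exists 0; [exists 0%Z, 0%Z; rewrite lexx | rewrite mulr0].
  move=> hn; exists (y / x); last by rewrite divfK.
  exists (- n%:Z)%Z, n%:Z.
  have : `|y / x| <= n%:R by rewrite normrM normfV ler_pdivrMr ?normr_gt0.
  by rewrite intrN !pmulrn ler_norml.
Qed.

Lemma vle_trans x y z : vle x y -> vle y z -> vle x z.
Proof.
move=> /vleP[n hn] /vleP[m hm]; apply/vleP; exists (m * n)%N.
by rewrite natrM -mulrA; apply: (le_trans hm); rewrite ler_wpM2l.
Qed.

Lemma vle_divn x (k : nat) : (0 < k)%N -> vle (x / k%:R) x.
Proof.
move=> k0; apply/vleP; exists k.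
have kp : 0 < k%:R :> F by rewrite ltr0n.
by rewrite normrM normfV (gtr0_norm kp) mulrCA divff ?mulr1 ?gt_eqF.
Qed.

End Valuation.

(* [dominates_gap D E x] for [0 <= x] says [v x <= v (e - d)] for some [d] in
   [D] and [e] in [E]. *)
Definition dominates_gap (F : realFieldType) (D E : set F) (x : F) : Prop :=
  exists d e (n : nat), [/\ D d, E e & e - d <= n%:R * x].

Definition gaps_shrink (F : realFieldType) (D E : set F) : Prop :=
  forall d e (n : nat), D d -> E e ->
  exists d' e', [/\ D d', E e' & n%:R * (e' - d') <= e - d].

Section MaximalSegment.
Variables (F : realFieldType) (D E S : set F).
Hypotheses (ltDE : setlt D E) (segS : final_seg setT S) (disjS : disj_vdiff S D E).
Hypothesis maxS :
  forall S' : set F, final_seg setT S' -> disj_vdiff S' D E -> S' `<=` S.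

Lemma max_disj_final_segP x : S x <-> x != 0 /\ ~ dominates_gap D E `|x|.
Proof.
have [S_nz Sup] := segS; split.
- move=> Sx; split; first by case: (S_nz x Sx).
  move=> [d [e [n [Dd Ee hle]]]]; have lt_de := ltDE Dd Ee.
  apply: (disjS Dd Ee); apply: (Sup x) => //; first by rewrite subr_eq0 gt_eqF.
  by apply/vleP; exists n; rewrite ger0_norm // subr_ge0 ltW.
- apply: (maxS (S' := [set y | y != 0 /\ ~ dominates_gap D E `|y|])).
  + split; first by move=> y [].
    move=> y z [y0 hy] _ z0 /vleP[m hm]; split => // -[d [e [n [Dd Ee hle]]]].
    apply: hy; exists d, e, (n * m)%N; split => //.
    by rewrite natrM -mulrA (le_trans hle) // ler_wpM2l.
  + move=> d e Dd Ee [_]; apply; exists d, e, 1%N; split => //.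
    by rewrite mul1r ler_norm.
Qed.

Lemma Betw_eq_vball a : Betw setT D E a -> gaps_shrink D E ->
  (forall d, D d -> dominates_gap D E (a - d)) ->
  (forall e, E e -> dominates_gap D E (e - a)) ->
  Betw setT D E = vball setT S a.
Proof.
move=> [_ [aD aE]] shrink domD domE; apply/seteqP; split => b.
- move=> [_ [bD bE]]; split => //.
  have [->|ba] := eqVneq b a; [by left | right].
  apply/max_disj_final_segP; split; first by rewrite subr_eq0 eq_sym.
  move=> [d [e [n [Dd Ee hle]]]].
  have [d' [e' [Dd' Ee' hshr]]] := shrink d e n.+1 Dd Ee.
  have gap_pos := ltDE Dd' Ee'.
  have hab : `|a - b| < e' - d'.
    have := aD d' Dd'; have := aE e' Ee'; have := bD d' Dd'; have := bE e' Ee'.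
    rewrite ltr_norml => *; apply/andP; split; lra.
  have : n.+1%:R * (e' - d') <= n%:R * (e' - d').
    by rewrite (le_trans hshr) // (le_trans hle) // ler_wpM2l // ltW.
  rewrite -natr1 mulrDl mul1r; lra.
- move=> [_ [->|Sab]]; first by split.
  have [_ nodom] := (max_disj_final_segP _).1 Sab.
  split=> //; split.
  + move=> d Dd; rewrite ltNge; apply/negP => bd; apply: nodom.
    have [d' [e' [n [Dd' Ee' hle]]]] := domD d Dd.
    exists d', e', n; split => //; rewrite (le_trans hle) // ler_wpM2l //.
    have := aD d Dd => lt_da; rewrite ger0_norm; lra.
  + move=> e Ee; rewrite ltNge; apply/negP => eb; apply: nodom.
    have [d' [e' [n [Dd' Ee' hle]]]] := domE e Ee.
    exists d', e', n; split => //; rewrite (le_trans hle) // ler_wpM2l //.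
    have := aE e Ee => lt_ae; rewrite ler0_norm; lra.
Qed.

End MaximalSegment.

Section Subfield.
Variables (F : realFieldType) (R : set F).
Hypothesis subR : subfield R.

Lemma subfieldB x y : R x -> R y -> R (x - y).
Proof. by case: subR => _ _ + _ _; apply. Qed.

Lemma subfieldN x : R x -> R (- x).
Proof. by rewrite -sub0r; apply: subfieldB; case: subR. Qed.

Lemma subfieldD x y : R x -> R y -> R (x + y).
Proof. by move=> Rx Ry; rewrite -[y]opprK; apply/subfieldB/subfieldN. Qed.

Lemma subfieldM x y : R x -> R y -> R (x * y).
Proof. by case: subR => _ _ _ + _; apply. Qed.

Lemma subfieldV x : R x -> R x^-1.
Proof. by case: subR => _ _ _ _; apply. Qed.

Lemma subfield_nat (n : nat) : R n%:R.
Proof.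
elim: n => [|n IH]; first by case: subR.
by rewrite -natr1; apply: subfieldD => //; case: subR.
Qed.

End Subfield.

Lemma exists_crossing (P Q : nat -> Prop) n :
  (forall k, P k \/ Q k) -> ~ Q 0%N -> Q n -> exists k, P k /\ Q k.+1.
Proof.
move=> PQ nQ0; elim: n => [//|n IH] Qn.
by case: (PQ n) => [Pn | /IH]; [exists n |].
Qed.

Definition vge_seg (F : realFieldType) (K : set F) (r : F) : set F :=
  [set s | K s /\ s != 0 /\ vle r s].

Lemma final_seg_vge (F : realFieldType) (K : set F) r : final_seg K (vge_seg K r).
Proof.
split; first by move=> x [? []].
by move=> x y [_ [_ rx]] Ky y0 xy; split=> //; split=> //; apply: vle_trans rx xy.
Qed.

Section Cut.
Variables (F : realFieldType) (R D E : set F).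
Hypotheses (subR : subfield R) (cutDE : is_cut R D E).

Let DR : D `<=` R. Proof. by case: cutDE. Qed.
Let ER : E `<=` R. Proof. by case: cutDE => _ []. Qed.
Let ltDE : setlt D E. Proof. by case: cutDE => _ [_ []]. Qed.

Lemma cut_memDE y : R y -> D y \/ E y.
Proof. by case: cutDE => _ [_ [_ <-]]. Qed.

Lemma cut_initial y y' : D y' -> R y -> y <= y' -> D y.
Proof.
move=> Dy' Ry le_yy'; case: (cut_memDE Ry) => // Ey.
by have := lt_le_trans (ltDE Dy' Ey) le_yy'; rewrite ltxx.
Qed.

Lemma cut_final y y' : E y' -> R y -> y' <= y -> E y.
Proof.
move=> Ey' Ry le_y'y; case: (cut_memDE Ry) => // Dy.
by have := lt_le_trans (ltDE Dy Ey') le_y'y; rewrite ltxx.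
Qed.

Lemma cut_plusE B : D = init_hull R B -> (D, E) = cut_plus R B.
Proof.
rewrite /cut_plus => <-; congr pair; apply/seteqP; split => y.
- by move=> Ey; split; [exact: ER | move=> Dy; have := ltDE Dy Ey; rewrite ltxx].
- by move=> [Ry nDy]; case: (cut_memDE Ry).
Qed.

Lemma cut_minusE B : E = final_hull R B -> (D, E) = cut_minus R B.
Proof.
rewrite /cut_minus => <-; congr pair; apply/seteqP; split => y.
- by move=> Dy; split; [exact: DR | move=> Ey; have := ltDE Dy Ey; rewrite ltxx].
- by move=> [Ry nEy]; case: (cut_memDE Ry).
Qed.

(* Cut [[d, e]] into [n.+1] equal pieces; one of them straddles the cut. *)
Lemma cut_gaps_shrink : gaps_shrink D E.
Proof.
move=> d e n Dd Ee; have lt_de := ltDE Dd Ee.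
have n1_neq0 : n.+1%:R != 0 :> F by rewrite pnatr_eq0.
pose h := (e - d) / n.+1%:R; pose f k := d + k%:R * h.
have nh : n.+1%:R * h = e - d by rewrite /h mulrC divfK.
have h_pos : 0 < h by rewrite divr_gt0 ?ltr0n // subr_gt0.
have Rf k : R (f k).
  apply: subfieldD (DR Dd) (subfieldM _ (subfield_nat _ _) _) => //.
  apply: subfieldM (subfieldB _ (ER Ee) (DR Dd)) (subfieldV _ (subfield_nat _ _)) => //.
have [k [Dk Ek]] : exists k, D (f k) /\ E (f k.+1).
  apply: (exists_crossing (n := n.+1) (fun k => cut_memDE (Rf k))).
  - by rewrite /f mul0r addr0 => Ed; have := ltDE Dd Ed; rewrite ltxx.
  - by rewrite /f nh addrC subrK.
exists (f k), (f k.+1); split => //.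
have -> : f k.+1 - f k = h by rewrite /f -natr1; ring.
by rewrite -nh; apply: ler_wpM2r; [exact: ltW | rewrite ler_nat].
Qed.

Lemma not_ball_cut_dominates_left a : ~ ball_cut R D E ->
  Betw setT D E a -> forall d, D d -> dominates_gap D E (a - d).
Proof.
move=> nbc [_ [aD _]] d Dd; apply: contrapT => nodom; apply: nbc.
have lt_da := aD d Dd.
pose B := vball R (vge_seg R (a - d)) d.
have BD : B `<=` D.
  move=> x [Rx [->|[_ [_ /vleP[n hn]]]]] //.
  case: (cut_memDE Rx) => // Ex; case: nodom; exists d, x, n; split => //.
  have lt_dx := ltDE Dd Ex.
  by move: hn; rewrite distrC !ger0_norm // subr_ge0 ltW.
exists B; split; first by exists d, (vge_seg R (a - d)); split; [exact: DR | exact: final_seg_vge |].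
left; apply: cut_plusE; apply/seteqP; split => y; last first.
  by move=> [Ry [x Bx le_yx]]; apply: cut_initial (BD _ Bx) Ry le_yx.
move=> Dy; have Ry := DR Dy; split => //.
case: (lerP y d) => [le_yd | lt_dy]; first by exists d => //; split; [exact: DR | left].
exists y => //; split => //; right; split; first by apply: subfieldB => //; exact: DR.
split; first by rewrite subr_eq0 lt_eqF.
have lt_ya := aD y Dy.
by apply/vleP; exists 1%N; rewrite mul1r distrC !ger0_norm; lra.
Qed.

Lemma not_ball_cut_dominates_right a : ~ ball_cut R D E ->
  Betw setT D E a -> forall e, E e -> dominates_gap D E (e - a).
Proof.
move=> nbc [_ [_ aE]] e Ee; apply: contrapT => nodom; apply: nbc.
have lt_ae := aE e Ee.
pose B := vball R (vge_seg R (e - a)) e.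
have BE : B `<=` E.
  move=> x [Rx [->|[_ [_ /vleP[n hn]]]]] //.
  case: (cut_memDE Rx) => // Dx; case: nodom; exists x, e, n; split => //.
  have lt_xe := ltDE Dx Ee.
  by move: hn; rewrite !ger0_norm // subr_ge0 ltW.
exists B; split; first by exists e, (vge_seg R (e - a)); split; [exact: ER | exact: final_seg_vge |].
right; apply: cut_minusE; apply/seteqP; split => y; last first.
  by move=> [Ry [x Bx le_xy]]; apply: cut_final (BE _ Bx) Ry le_xy.
move=> Ey; have Ry := ER Ey; split => //.
case: (lerP e y) => [le_ey | lt_ye]; first by exists e => //; split; [exact: ER | left].
exists y => //; split => //; right; split; first by apply: subfieldB => //; exact: ER.
split; first by rewrite subr_eq0 gt_eqF.
have lt_ay := aE y Ey.
by apply/vleP; exists 1%N; rewrite mul1r !ger0_norm; lra.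
Qed.

End Cut.

Section BallComplement.
Variables (F : realFieldType) (R D E S0 : set F) (c : F).
Hypotheses (subR : subfield R) (DR : D `<=` R) (ER : E `<=` R).
Hypotheses (Rc : R c) (segS0 : final_seg R S0).
Hypotheses (ltDB : setlt D (vball R S0 c)) (ltBE : setlt (vball R S0 c) E).
Hypothesis coverDBE : D `|` vball R S0 c `|` E = R.

Let Bc : vball R S0 c c. Proof. by split; [|left]. Qed.

Let S0N x : S0 x -> S0 (- x).
Proof.
have [S0R S0up] := segS0; move=> Sx; have [Rx x0] := S0R x Sx.
apply: S0up Sx (subfieldN subR Rx) _ _; first by rewrite oppr_eq0.
by apply/vleP; exists 1%N; rewrite mul1r normrN.
Qed.

Let notS0_divn x (k : nat) : R x -> x != 0 -> ~ S0 x -> (0 < k)%N -> ~ S0 (x / k%:R).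
Proof. by move=> Rx x0 nSx k0 Sxk; apply: nSx; apply: segS0.2 Sxk Rx x0 (vle_divn _ k0). Qed.

Lemma ball_complement_outside x : R x -> 0 < x -> ~ S0 x -> D (c - x) /\ E (c + x).
Proof.
move=> Rx x_pos nSx; split.
- have : (D `|` vball R S0 c `|` E) (c - x) by rewrite coverDBE; apply: subfieldB.
  case=> [[// | [_ [cx | Sx]]] | Ex].
  + lra.
  + by rewrite subKr in Sx.
  + by have := ltBE Bc Ex; lra.
- have : (D `|` vball R S0 c `|` E) (c + x) by rewrite coverDBE; apply: subfieldD.
  case=> [[Dx | [_ [cx | Sx]]] | //].
  + by have := ltDB Dx Bc; lra.
  + lra.
  + by case: nSx; rewrite -[x]opprK; apply: S0N; rewrite opprD addNKr in Sx.
Qed.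

Lemma ball_complement_left d : D d -> 0 < c - d /\ ~ S0 (c - d).
Proof.
move=> Dd; split; first by rewrite subr_gt0; apply: ltDB Dd Bc.
by move=> Sd; have := ltDB Dd (conj (DR Dd) (or_intror Sd)); rewrite ltxx.
Qed.

Lemma ball_complement_right e : E e -> 0 < e - c /\ ~ S0 (e - c).
Proof.
move=> Ee; split; first by rewrite subr_gt0; apply: ltBE Bc Ee.
move=> /S0N; rewrite opprB => Se.
by have := ltBE (conj (ER Ee) (or_intror Se)) Ee; rewrite ltxx.
Qed.

Lemma ball_complement_gaps_shrink : gaps_shrink D E.
Proof.
move=> d e n Dd Ee.
have [lt_dc _] := ball_complement_left Dd; have [ec_pos nSec] := ball_complement_right Ee.
have Rec : R (e - c) by apply: subfieldB => //; exact: ER.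
pose h := (e - c) / (n.+1 * 2)%N%:R.
have nSh : ~ S0 h by apply: notS0_divn => //; rewrite gt_eqF.
have Rh : R h by apply: subfieldM (subfieldV _ (subfield_nat _ _)).
have h_pos : 0 < h by rewrite divr_gt0 ?ltr0n.
have [Dch Ech] := ball_complement_outside Rh h_pos nSh.
exists (c - h), (c + h); split => //.
have : n.+1%:R * (c + h - (c - h)) = e - c.
  by rewrite /h natrM; field; rewrite addrC natr1 pnatr_eq0.
rewrite -natr1 mulrDl mul1r; lra.
Qed.

Lemma ball_complement_dominates_left a :
  Betw setT D E a -> forall d, D d -> dominates_gap D E (a - d).
Proof.
move=> [_ [aD _]] d Dd; have [cd_pos nScd] := ball_complement_left Dd.
have Rcd : R (c - d) by apply: subfieldB => //; exact: DR.
have nSh : ~ S0 ((c - d) / 2%:R) by apply: notS0_divn => //; rewrite gt_eqF.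
have Rh : R ((c - d) / 2%:R) by apply: subfieldM (subfieldV _ (subfield_nat _ _)).
have [Dch _] := ball_complement_outside Rh (divr_gt0 cd_pos (ltr0n _ 2)) nSh.
have [_ Ecd] := ball_complement_outside Rcd cd_pos nScd.
by exists d, (c + (c - d)), 4%N; split => //; have := aD _ Dch; lra.
Qed.

Lemma ball_complement_dominates_right a :
  Betw setT D E a -> forall e, E e -> dominates_gap D E (e - a).
Proof.
move=> [_ [_ aE]] e Ee; have [ec_pos nSec] := ball_complement_right Ee.
have Rec : R (e - c) by apply: subfieldB => //; exact: ER.
have nSh : ~ S0 ((e - c) / 2%:R) by apply: notS0_divn => //; rewrite gt_eqF.
have Rh : R ((e - c) / 2%:R) by apply: subfieldM (subfieldV _ (subfield_nat _ _)).
have [_ Ech] := ball_complement_outside Rh (divr_gt0 ec_pos (ltr0n _ 2)) nSh.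
have [Dec _] := ball_complement_outside Rec ec_pos nSec.
by exists (c - (e - c)), e, 4%N; split => //; have := aE _ Ech; lra.
Qed.

End BallComplement.

Theorem lemma4p1 (F : realFieldType) (R D E : set F) :
  subfield R ->
  D `<=` R -> E `<=` R -> D !=set0 -> E !=set0 -> setlt D E ->
  ((is_cut R D E /\ ~ ball_cut R D E /\ Betw setT D E !=set0)
    \/ ball_complement R D E) ->
  forall S : set F,
    final_seg setT S -> disj_vdiff S D E ->
    (forall S' : set F, final_seg setT S' -> disj_vdiff S' D E -> S' `<=` S) ->
  forall a, Betw setT D E a -> Betw setT D E = vball setT S a.
Proof.
move=> subR DR ER _ _ ltDE hcase S segS disjS maxS a Ba.
have [shrink domD domE] : [/\ gaps_shrink D E,
    (forall d, D d -> dominates_gap D E (a - d)) &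
    (forall e, E e -> dominates_gap D E (e - a))].
  case: hcase => [[cutDE [nbc _]] | [_ [[c [S0 [Rc segS0 ->]]] ltDB ltBE cover]]].
  - split; first exact: cut_gaps_shrink subR cutDE.
    + exact: not_ball_cut_dominates_left subR cutDE a nbc Ba.
    + exact: not_ball_cut_dominates_right subR cutDE a nbc Ba.
  - split; first exact: ball_complement_gaps_shrink subR DR ER Rc segS0 ltDB ltBE cover.
    + exact: ball_complement_dominates_left subR DR Rc segS0 ltDB ltBE cover a Ba.
    + exact: ball_complement_dominates_right subR ER Rc segS0 ltDB ltBE cover a Ba.
exact: (Betw_eq_vball ltDE segS disjS maxS Ba shrink domD domE).
Qed.
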